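(* Let $X,Y$ be topological spaces, $A\subset Y$ a nonempty finite subset, and $C_A^X=X\times A\in M(X,Y)$ the constant multivalued map with value $A$. Then $H_n^M(C_A^X):H_n^M(X)\to H_n^M(Y)$ is the zero homomorphism for every $n>0$.
   Context: A continuous multivalued map $X\to Y$ is a subset $T\subset X\times Y$ such that the restriction of the projection $X\times Y\to X$ to $T$ is proper (universally closed), surjective and has finite fibers; $M(X,Y)$ is the set of these. For $R\in M(X,Y)$, $S\in M(Y,Z)$ the composition $S\circ R\subset X\times Z$ is the image of $(R\times Z)\cap(X\times S)$ under the projection $X\times Y\times Z\to X\times Z$. A continuous single-valued map $f$ is identified with its graph $\mathrm{gr}(f)$. Let $\Delta_n=\{(t_0,\dots,t_n)\in\mathbb{R}^{n+1}: t_i\ge 0,\ \sum t_i=1\}$ and $\delta^n_i:\Delta_{n-1}\to\Delta_n$, $\delta^n_i(t_0,\dots,t_{n-1})=(t_0,\dots,t_{i-1},0,t_i,\dots,t_{n-1})$. Set $S_n^M(X)=M(\Delta_n,X)$, $d^i_n(\alpha)=\alpha\circ\mathrm{gr}(\delta^n_i)$, let $C_n^M(X)$ be the free abelian group on $S_n^M(X)$ with differential $d_n=\sum_{i=0}^n(-1)^i d^i_n$, and $H_n^M(X)=H_n(C_*^M(X))$. For $R\in M(X,Y)$, $H_n^M(R)$ is induced by the chain map $\alpha\mapsto R\circ\alpha$. *)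

From HB Require Import structures.
From mathcomp Require Import all_boot all_order all_algebra.
From mathcomp Require Import all_classical all_reals all_analysis.
From mathcomp Require Import subtype_topology.
Unset Printing Implicit Defensive.
Import Order.TTheory GRing.Theory Num.Theory.
Import numFieldNormedType.Exports.
Local Open Scope classical_set_scope.
Local Open Scope ring_scope.

(* The projection T -> X (T with the subspace topology of X * Y) is
   universally closed: for every space Z, the map T * Z -> X * Z is closed.
   Closed subsets of T * Z are exactly the traces D `&` (T * Z) of closed
   subsets D of (X * Y) * Z. *)
Definition univ_closed_proj {X Y : topologicalType} (T : set (X * Y)) : Prop :=
  forall (Z : topologicalType) (D : set ((X * Y) * Z)), closed D ->
    closed [set xz : X * Z | exists y : Y, T (xz.1, y) /\ D ((xz.1, y), xz.2)].

Definition is_mvmap {X Y : topologicalType} (T : set (X * Y)) : Prop :=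
  [/\ univ_closed_proj T,
      (forall x : X, exists y : Y, T (x, y)) &
      (forall x : X, finite_set [set y : Y | T (x, y)])].

Definition mvcomp {X Y Z : Type} (R : set (X * Y)) (S : set (Y * Z)) : set (X * Z) :=
  [set xz | exists y : Y, R (xz.1, y) /\ S (y, xz.2)].

Definition graph {X Y : Type} (f : X -> Y) : set (X * Y) := [set xy | xy.2 = f xy.1].

Definition constmv {X Y : Type} (A : set Y) : set (X * Y) := [set xy | A xy.2].

Definition simplex_set (R : realType) (n : nat) : set 'rV[R]_(n.+1) :=
  [set t | (forall i, 0 <= t ord0 i) /\ \sum_(i < n.+1) t ord0 i = 1].

Definition Simplex (R : realType) (n : nat) : topologicalType :=
  set_type (simplex_set R n).

Definition face_vec {R : realType} {n : nat} (i : nat) (t : 'rV[R]_(n.+1)) : 'rV[R]_(n.+2) :=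
  \row_(j < n.+2) (if (j < i)%N then t ord0 (inord j)
                   else if j == i :> nat then 0 else t ord0 (inord j.-1)).

Definition face_graph (R : realType) (n i : nat) : set (Simplex R n * Simplex R n.+1) :=
  [set st | set_val st.2 = face_vec i (set_val st.1)].

Definition Sing (R : realType) (X : topologicalType) (n : nat) : set (set (Simplex R n * X)) :=
  [set a | is_mvmap a].

Definition is_chain {R : realType} {X : topologicalType} {n : nat}
    (c : set (Simplex R n * X) -> int) : Prop :=
  finite_set [set a | c a != 0] /\ [set a | c a != 0] `<=` Sing R X n.

Definition face {R : realType} {X : topologicalType} {n : nat} (i : nat)
    (a : set (Simplex R n.+1 * X)) : set (Simplex R n * X) :=
  mvcomp (face_graph R n i) a.

Definition bdry {R : realType} {X : topologicalType} {n : nat}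
    (c : set (Simplex R n.+1 * X) -> int) : set (Simplex R n * X) -> int :=
  fun b => \sum_(a \in [set a | c a != 0])
             \sum_(i < n.+2) (c a * (-1) ^+ i * (face i a == b)%:R).

Definition push {R : realType} {X Y : topologicalType} {n : nat} (T : set (X * Y))
    (c : set (Simplex R n * X) -> int) : set (Simplex R n * Y) -> int :=
  fun b => \sum_(a \in [set a | c a != 0]) (c a * (mvcomp a T == b)%:R).

(* H_n^M(T) is zero for n = m+1: every cycle is sent to a boundary *)
Definition homology_map_zero (R : realType) {X Y : topologicalType} (m : nat)
    (T : set (X * Y)) : Prop :=
  forall c : set (Simplex R m.+1 * X) -> int,
    is_chain c -> bdry c = (fun _ => 0) ->
    exists e : set (Simplex R m.+2 * Y) -> int,
      is_chain e /\ bdry e = push T c.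

(* Composing any M-simplex with the constant map X x A gives the constant
   simplex Delta_k x A, so the image of a k-chain c is w(c) [Delta_k x A],
   where w(c) is the sum of the coefficients of c.  All faces of a constant
   simplex are constant, so the boundary of [Delta_(k+1) x A] is
   [Delta_k x A] for odd k and 0 for even k.  Hence for odd k the image of c
   is a boundary; for even k, summing the cycle equation over all faces of
   the simplices of c counts each coefficient with total sign
   1 - 1 + ... + 1 = 1, so w(c) = 0 and the image vanishes. *)

From HB Require Import structures.
From mathcomp Require Import all_boot all_order all_algebra.
From mathcomp Require Import all_classical all_reals all_analysis.
Import Order.TTheory GRing.Theory Num.Theory.
Local Open Scope classical_set_scope.
Local Open Scope ring_scope.

Lemma continuous_insert_mid (X Y Z : topologicalType) (y : Y) :
  continuous (fun xz : X * Z => ((xz.1, y), xz.2)).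
Proof.
move=> xz.
have to_xy : (fun xz : X * Z => (xz.1, y)) @ xz --> (xz.1, y).
  by apply: cvg_pair; [exact: cvg_fst | exact: cvg_cst].
exact: cvg_pair to_xy cvg_snd.
Qed.

Lemma is_mvmap_constmv (X Y : topologicalType) (A : set Y) :
  A !=set0 -> finite_set A -> is_mvmap (constmv (X := X) A).
Proof.
move=> [y0 Ay0] Afin; split=> [Z D cD|x|//].
- have -> : [set xz : X * Z | exists y,
                constmv A (xz.1, y) /\ D ((xz.1, y), xz.2)]
      = \bigcup_(y in A) ((fun xz : X * Z => ((xz.1, y), xz.2)) @^-1` D).
    by apply/seteqP; split=> [xz [y [Ay Dy]]|xz [y Ay Dy]]; exists y.
  apply: closed_bigcup => // y _; apply: preimage_closed => // xz _.
  exact: continuous_insert_mid.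
- by exists y0.
Qed.

Lemma mvcomp_constmv (X Y Z : Type) (a : set (X * Y)) (A : set Z) :
  (forall x, exists y, a (x, y)) -> mvcomp a (constmv A) = constmv A.
Proof.
move=> a_total; apply/seteqP; split=> [[x z] [y [_ Az]] //|[x z] Az].
by have [y axy] := a_total x; exists y.
Qed.

Lemma face_vec_simplex (R : realType) (n i : nat) (t : 'rV[R]_(n.+1)) :
  (i < n.+2)%N -> simplex_set R n t -> simplex_set R n.+1 (face_vec i t).
Proof.
move=> lt_i [t_ge0 t_sum1]; split=> [j|].
  by rewrite mxE; case: ifP => _; [exact: t_ge0 | case: ifP].
rewrite -t_sum1 (bigD1_ord (Ordinal lt_i)) //= mxE ltnn eqxx add0r.
apply: eq_bigr => k _; rewrite mxE /= /bump.
have [le_ik|lt_ki] := leqP i k.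
  rewrite add1n ltnNge (leqW le_ik) /= gtn_eqF //=.
  by congr (t ord0 _); apply: val_inj; rewrite /= inordK.
by rewrite add0n lt_ki; congr (t ord0 _); apply: val_inj; rewrite /= inordK.
Qed.

Lemma face_constmv (R : realType) (Y : topologicalType) (A : set Y) (n : nat)
    (i : 'I_n.+2) :
  face i (constmv (X := Simplex R n.+1) A) = constmv A.
Proof.
apply: mvcomp_constmv => s.
have s_face : face_vec i (set_val s) \in simplex_set R n.+1.
  by apply/mem_set/face_vec_simplex => //; exact: set_valP.
by exists (exist (fun t => t \in simplex_set R n.+1) _ s_face : Simplex R n.+1).
Qed.

Lemma sum_sign_ord (n : nat) : \sum_(i < n) (-1 : int) ^+ i = (odd n)%:R.
Proof.
elim: n => [|n IHn]; first by rewrite big_ord0.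
rewrite big_ord_recr /= IHn -signr_odd.
by case: (odd n); rewrite /= ?expr1 ?addrN ?expr0 ?add0r.
Qed.

Lemma sum_eq_uniq (T : eqType) (r : seq T) (x : T) :
  uniq r -> x \in r -> \sum_(b <- r) ((x == b)%:R : int) = 1.
Proof.
move=> r_uniq r_x.
have -> : \sum_(b <- r) ((x == b)%:R : int) = (count_mem x r)%:R.
  elim: r {r_uniq r_x} => [|y r IHr]; first by rewrite big_nil.
  by rewrite big_cons IHr natrD eq_sym.
by rewrite count_uniq_mem // r_x.
Qed.

Section ConstantChains.
Variable R : realType.

Definition chain_weight {X : topologicalType} {n : nat}
    (c : set (Simplex R n * X) -> int) : int :=
  \sum_(a \in [set a | c a != 0]) c a.

Definition simplex_chain {X : topologicalType} {n : nat} (k : int)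
    (s : set (Simplex R n * X)) : set (Simplex R n * X) -> int :=
  fun a => k * (s == a)%:R.

Lemma simplex_chain_support {X : topologicalType} {n : nat}
    (k : int) (s : set (Simplex R n * X)) :
  [set a | simplex_chain k s a != 0] = if k == 0 then set0 else [set s].
Proof.
rewrite /simplex_chain; have [->|k_neq0] := eqVneq k 0.
  by apply/seteqP; split=> a //=; rewrite mul0r eqxx.
apply/seteqP; split=> a /=; last by move=> ->; rewrite eqxx mulr1.
by have [//|_] := eqVneq s a; rewrite mulr0 eqxx.
Qed.

Lemma is_chain_simplex_chain {X : topologicalType} {n : nat}
    (k : int) (s : set (Simplex R n * X)) :
  is_mvmap s -> is_chain (simplex_chain k s).
Proof.
rewrite /is_chain simplex_chain_support => s_mv.
by case: eqP => _; split=> // a ->.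
Qed.

Lemma bdry_simplex_chain {X : topologicalType} {n : nat}
    (k : int) (s : set (Simplex R n.+1 * X)) b :
  bdry (simplex_chain k s) b
  = k * \sum_(i < n.+2) (-1) ^+ i * (face i s == b)%:R.
Proof.
rewrite /bdry simplex_chain_support; have [->|_] := eqVneq k 0.
  by rewrite mul0r fsbig_set0.
rewrite fsbig_set1 big_distrr; apply: eq_bigr => i _.
by rewrite /simplex_chain eqxx mulr1 -mulrA.
Qed.

Lemma bdry_simplex_chain_constmv {X : topologicalType} {n : nat}
    (A : set X) (k : int) :
  bdry (simplex_chain k (constmv (X := Simplex R n.+1) A))
  = simplex_chain (k * (odd n)%:R) (constmv A).
Proof.
apply: funext => b; rewrite bdry_simplex_chain.
under eq_bigr do rewrite face_constmv.
by rewrite -big_distrl sum_sign_ord /= negbK mulrA.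
Qed.

Lemma chain_weight_cycle {X : topologicalType} {n : nat}
    (c : set (Simplex R n.+1 * X) -> int) :
  is_chain c -> bdry c = (fun _ => 0) -> odd n -> chain_weight c = 0.
Proof.
move=> [c_fin _] c_cycle n_odd.
pose s := finmap.enum_fset (fset_set [set a | c a != 0]).
pose r := undup [seq face (nat_of_ord i) a | a <- s, i <- enum 'I_n.+2].
have : \sum_(b <- r) bdry c b = 0 by rewrite big1 // => b _; rewrite c_cycle.
rewrite /bdry; under eq_bigr do rewrite fsbig_finite //.
rewrite exchange_big /= /chain_weight fsbig_finite // => sum_faces0.
apply: etrans sum_faces0.
rewrite big_seq [RHS]big_seq; apply: eq_bigr => a s_a; rewrite exchange_big /=.
rewrite (eq_bigr (fun i : 'I_n.+2 => c a * (-1) ^+ i)); last first.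
  move=> i _; rewrite -big_distrr /= sum_eq_uniq ?undup_uniq ?mulr1 //.
  by rewrite mem_undup; apply: allpairs_f => //; rewrite mem_enum.
by rewrite -big_distrr /= sum_sign_ord /= n_odd mulr1.
Qed.

Lemma push_constmv {X Y : topologicalType} {n : nat} (A : set Y)
    (c : set (Simplex R n * X) -> int) :
  is_chain c -> push (constmv A) c = simplex_chain (chain_weight c) (constmv A).
Proof.
move=> [_ c_sing]; apply: funext => b.
rewrite /push /simplex_chain /chain_weight mulr_fsuml.
apply: eq_fsbigr => a c_a.
by have [_ a_total _] := c_sing a (set_mem c_a); rewrite mvcomp_constmv.
Qed.

End ConstantChains.

Theorem mainTheorem5 (R : realType) (X Y : topologicalType) (A : set Y) :
  A !=set0 -> finite_set A ->
  forall m : nat, homology_map_zero R m (constmv (X := X) A).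
Proof.
move=> A_neq0 A_fin m c c_chain c_cycle.
exists (simplex_chain R (chain_weight R c) (constmv A)); split.
  exact/is_chain_simplex_chain/is_mvmap_constmv.
rewrite bdry_simplex_chain_constmv push_constmv // oddS.
have [m_odd|_] := boolP (odd m); last by rewrite mulr1.
by rewrite mulr0 chain_weight_cycle.
Qed.
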